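(* Let $G$ and $H$ be cyclically orderable graphs, each with at least two vertices, with $d(G)=d(H)$. Then for any $u\in V(G)$ and $v\in V(H)$, the series composition $G\oplus H$ obtained by gluing $u$ and $v$ is cyclically orderable.
   Context: The density of a connected graph $G$ with at least two vertices is $d(G)=\frac{|E(G)|}{|V(G)|-1}$. A cyclic base ordering (CBO) of a connected graph $G$ is a bijection $\mathcal{O}:E(G)\to\{1,\dots,|E(G)|\}$ such that for every $i\in\{1,\dots,|E(G)|\}$ the edges $\mathcal{O}^{-1}(i),\dots,\mathcal{O}^{-1}(i+|V(G)|-2)$ (indices taken cyclically modulo $|E(G)|$) induce a spanning tree of $G$; $G$ is cyclically orderable if it has a CBO. Given graphs $G$ and $H$ (vertex-disjoint) with $u\in V(G)$ and $v\in V(H)$, the series composition $G\oplus H$ is the graph obtained from the disjoint union of $G$ and $H$ by identifying $u$ and $v$ into a single vertex. *)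

From HB Require Import structures.
From mathcomp Require Import all_boot all_order all_algebra.
Set Implicit Arguments. Unset Strict Implicit. Unset Printing Implicit Defensive.

(* Finite multigraphs: a finite vertex type, a finite edge type, and an
   endpoint map.  Parallel edges are allowed (loops too; a loop can never
   belong to a spanning tree). *)
Record graph := Graph {
  vert : finType;
  edge : finType;
  ends : edge -> vert * vert }.

Definition adjF (G : graph) (F : {set edge G}) : rel (vert G) :=
  fun x y => [exists e in F, (ends e == (x, y)) || (ends e == (y, x))].

Definition connectedF (G : graph) (F : {set edge G}) : bool :=
  [forall x, forall y, connect (adjF F) x y].

Definition connected_graph (G : graph) : bool := connectedF [set: edge G].

(* (V(G), F) is a spanning tree: connected, and acyclic in the sense that
   deleting any edge of F disconnects its endpoints (minimally connected). *)
Definition spanning_tree (G : graph) (F : {set edge G}) : bool :=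
  connectedF F &&
  [forall e in F, ~~ connect (adjF (F :\ e)) (ends e).1 (ends e).2].

Definition density (G : graph) : rat :=
  (#|edge G|%:R / (#|vert G|.-1)%:R)%R.

Definition window (G : graph) (O : edge G -> 'I_#|edge G|) (i : nat)
  : {set edge G} :=
  [set e | [exists j : 'I_(#|vert G|.-1), val (O e) == (i + j) %% #|edge G|]].

Definition CBO (G : graph) (O : edge G -> 'I_#|edge G|) : Prop :=
  bijective O /\ forall i : 'I_#|edge G|, spanning_tree (window O i).

Definition cyclically_orderable (G : graph) : Prop :=
  connected_graph G /\ exists O, CBO (G:=G) O.

(* Series composition G (+) H gluing u in V(G) and v in V(H):
   vertices are V(G) + V(H) without inr v, and inr v is sent to inl u. *)
Section Series.
Variables (G H : graph) (u : vert G) (v : vert H).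

Definition sc_vert : finType := {x : vert G + vert H | x != inr v}.

Definition sc_glue (x : vert G + vert H) : sc_vert :=
  match insub x with
  | Some y => y
  | None => exist _ (inl u) isT
  end.

Definition sc_ends (e : edge G + edge H) : sc_vert * sc_vert :=
  match e with
  | inl e => (sc_glue (inl (ends e).1), sc_glue (inl (ends e).2))
  | inr e => (sc_glue (inr (ends e).1), sc_glue (inr (ends e).2))
  end.

Definition series_comp : graph :=
  @Graph sc_vert (edge G + edge H)%type sc_ends.
End Series.

From mathcomp Require Import all_boot all_order all_algebra.
From mathcomp Require Import zify.
Set Implicit Arguments. Unset Strict Implicit. Unset Printing Implicit Defensive.

(* Merge the two cyclic orders as evenly as possible.  With m = |E(G)|,
   m' = |E(H)| and N = m + m', let c t = floor (t m / N) be the number of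
   edges of G among the first t positions: position t receives edge number
   c t of G when c rises at t, and edge number t - c t of H otherwise.
   Equal densities mean L m = K N for K = |V(G)| - 1, K' = |V(H)| - 1 and
   L = K + K' = |V(G (+) H)| - 1, so c (t + L) = c t + K: every window of L
   consecutive positions consists of K consecutive edges of the order of G
   and K' consecutive edges of the order of H, i.e. of a spanning tree of G
   and a spanning tree of H, and these glue at u = v into a spanning tree
   of G (+) H. *)

Record staircase (c : nat -> nat) (N M L K : nat) : Prop := Staircase {
  staircase_gt0 : 0 < N;
  staircase0 : c 0 = 0;
  staircase_le : forall x, c x <= c x.+1;
  staircase_leS : forall x, c x.+1 <= (c x).+1;
  staircase_period : forall x, c (x + N) = c x + M;
  staircase_shift : forall x, c (x + L) = c x + K }.

Definition rises (c : nat -> nat) (t : nat) : bool := c t.+1 == (c t).+1.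

Lemma floor_staircase N a L K : 0 < N -> a <= N -> L * a = K * N ->
  staircase (fun x => x * a %/ N) N a L K.
Proof.
move=> N_gt0 aN LK; split=> // [|x|x|x|x]; first by rewrite div0n.
- by apply: leq_div2r; rewrite leq_mul2r leqnSn orbT.
- rewrite -[(x * a %/ N).+1]add1n -(divnMDl 1 _ N_gt0) mul1n.
  by apply: leq_div2r; rewrite mulSn leq_add2r.
- by rewrite mulnDl addnC (mulnC N) divnMDl // addnC.
- by rewrite mulnDl LK addnC divnMDl // addnC.
Qed.

Section Staircase.
Variables (c : nat -> nat) (N M L K : nat).
Hypothesis cS : staircase c N M L K.

Lemma staircase_mono : {homo c : x y / x <= y}.
Proof.
move=> x y /subnKC <-; elim: (y - x) => [|k IH]; first by rewrite addn0.
by rewrite addnS; apply: leq_trans IH (staircase_le cS _).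
Qed.

Lemma staircase_le_id x : c x <= x.
Proof.
elim: x => [|x IH]; first by rewrite (staircase0 cS).
by apply: leq_trans (staircase_leS cS x) _; rewrite ltnS.
Qed.

Lemma staircase_complement : staircase (fun x => x - c x) N (N - M) L (L - K).
Proof.
have le_id := staircase_le_id; have up := staircase_le cS; have upS := staircase_leS cS.
have MN : M <= N by have := le_id (0 + N); rewrite (staircase_period cS) (staircase0 cS).
have KL : K <= L by have := le_id (0 + L); rewrite (staircase_shift cS) (staircase0 cS).
split=> [||x|x|x|x].
- exact: staircase_gt0 cS.
- by rewrite (staircase0 cS).
- by have := upS x; have := le_id x; lia.
- by have := up x; have := le_id x; lia.
- by rewrite (staircase_period cS); have := le_id x; lia.
- by rewrite (staircase_shift cS); have := le_id x; lia.
Qed.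

Lemma rises_complement t : rises (fun x => x - c x) t = ~~ rises c t.
Proof.
rewrite /rises; have := staircase_le cS t; have := staircase_leS cS t.
have := staircase_le_id t; have := staircase_le_id t.+1.
by case: eqP => /=; lia.
Qed.

Lemma staircase_hit s k y : c s <= y < c (s + k) ->
  exists2 j, j < k & rises c (s + j) && (c (s + j) == y).
Proof.
elim: k => [|k IH] /andP [ys yk]; first by rewrite addn0 ltnNge ys in yk.
have [yk'|ky] := ltnP y (c (s + k)).
  by have [|j jk hj] := IH; [rewrite ys yk' | exists j => //; apply: ltnW].
have yE : c (s + k) = y.
  apply/eqP; rewrite eqn_leq ky -ltnS.
  by apply: leq_trans yk _; rewrite addnS (staircase_leS cS).
exists k => //; rewrite /rises yE eqxx andbT eqn_leq -addnS yk andbT.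
by rewrite -yE addnS (staircase_leS cS).
Qed.

Lemma staircase_periodn x k : c (x + k * N) = c x + k * M.
Proof.
elim: k => [|k IH]; first by rewrite !mul0n !addn0.
by rewrite !mulSn (addnC N) addnA (staircase_period cS) IH (addnC M) addnA.
Qed.

Lemma rises_mod t : rises c (t %% N) = rises c t.
Proof.
by rewrite {2}(divn_eq t N) /rises addnC -addSn !staircase_periodn -addSn eqn_add2r.
Qed.

Lemma rises_lt t : t < N -> rises c t -> c t < M.
Proof.
move=> tN /eqP ct; have := staircase_mono tN; rewrite ct.
by have := staircase_period cS 0; rewrite add0n (staircase0 cS) add0n => ->.
Qed.

Lemma rises_modM t : rises c t -> c t %% M = c (t %% N).
Proof.
move=> rt; rewrite {1}(divn_eq t N) addnC staircase_periodn addnC modnMDl modn_small //.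
by apply: rises_lt; [rewrite ltn_pmod ?(staircase_gt0 cS) | rewrite rises_mod].
Qed.

Lemma rises_inj t t' : rises c t -> rises c t' -> c t = c t' -> t = t'.
Proof.
wlog tt' : t t' / t <= t'.
  by move=> W rt rt' ctt'; case: (leqP t t') => [|/ltnW] h; [|apply/esym]; apply: W.
move=> /eqP rt _ ctt'; apply/eqP; rewrite eqn_leq tt' leqNgt; apply/negP => /staircase_mono.
by rewrite rt ctt' ltnn.
Qed.

Lemma rises_window s y : y < M ->
  [exists j : 'I_L, rises c (s + j) && (c ((s + j) %% N) == y)] =
  [exists j : 'I_K, (c s + j) %% M == y].
Proof.
move=> yM; apply/existsP/existsP => [[j /andP [rj /eqP cj]]|[j /eqP cj]].
  have cs_le : c s <= c (s + j) by apply: staircase_mono; rewrite leq_addr.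
  have jK : c (s + j) - c s < K.
    rewrite ltn_subLR // -(staircase_shift cS) -ltnS -(eqP rj) -addnS.
    by apply: staircase_mono; rewrite leq_add2l.
  by exists (Ordinal jK); rewrite /= subnKC // rises_modM // cj.
have [|k kL /andP [rk /eqP ck]] := @staircase_hit s L (c s + j).
  by rewrite leq_addr (staircase_shift cS) ltn_add2l ltn_ord.
by exists (Ordinal kL); rewrite /= -rises_modM // rk ck cj eqxx.
Qed.

End Staircase.

Lemma homo_connect (T1 T2 : finType) (e1 : rel T1) (e2 : rel T2) (f : T1 -> T2) :
  (forall x y, e1 x y -> connect e2 (f x) (f y)) ->
  forall x y, connect e1 x y -> connect e2 (f x) (f y).
Proof.
move=> f_e x y /connectP [p]; elim: p x => [|z p IH] x /=; first by move=> _ ->.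
by case/andP => /f_e xz /IH zy /zy; apply: connect_trans.
Qed.

Definition bridge (G : graph) (F : {set edge G}) (e : edge G) : bool :=
  ~~ connect (adjF (F :\ e)) (ends e).1 (ends e).2.

Section Retraction.
Variables (A S : graph) (j : edge A -> edge S) (i : vert A -> vert S) (r : vert S -> vert A).
Hypotheses (ends_j : forall g, ends (j g) = (i (ends g).1, i (ends g).2))
  (iK : cancel i r) (r_collapse : forall e, e \notin codom j -> r (ends e).1 = r (ends e).2).

Lemma connect_push (F : {set edge S}) x y :
  connect (adjF (j @^-1: F)) x y -> connect (adjF F) (i x) (i y).
Proof.
apply: homo_connect => {}x {}y /existsP [g /andP [gF gxy]].
rewrite inE in gF; apply/connect1/existsP; exists (j g); rewrite gF ends_j /=.
by case/orP: gxy => /eqP -> /=; rewrite eqxx ?orbT.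
Qed.

Lemma connect_pull (F : {set edge S}) a b :
  connect (adjF F) a b -> connect (adjF (j @^-1: F)) (r a) (r b).
Proof.
apply: homo_connect => {}a {}b /existsP [e /andP [eF eab]].
have [/codomP [g eg]|/r_collapse] := boolP (e \in codom j); last first.
  by case/orP: eab => /eqP -> /= ->.
subst e; apply/connect1/existsP; exists g; rewrite inE eF /=.
by case/orP: eab; rewrite ends_j => /eqP [<- <-]; rewrite !iK; case: (ends g) => ? ?;
  rewrite eqxx ?orbT.
Qed.

Lemma bridge_push (F : {set edge S}) g : injective j -> bridge (j @^-1: F) g -> bridge F (j g).
Proof.
move=> j_inj; apply: contra => /connect_pull.
have -> : j @^-1: (F :\ j g) = (j @^-1: F) :\ g.
  by apply/setP => g'; rewrite !inE (inj_eq j_inj).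
by rewrite ends_j /= !iK.
Qed.

End Retraction.

Section Series.
Variables (G H : graph) (u : vert G) (v : vert H).
Local Notation S := (series_comp u v).

Definition glue_l (x : vert G) : vert S := sc_glue u v (inl x).
Definition glue_r (y : vert H) : vert S := sc_glue u v (inr y).
Definition proj_l (w : vert S) : vert G := if val w is inl x then x else u.
Definition proj_r (w : vert S) : vert H := if val w is inr y then y else v.

Lemma val_sc_glue x : val (sc_glue u v x) = if x != inr v then x else inl u.
Proof. by rewrite /sc_glue; case: insubP => [y -> -> //|/negbTE ->]. Qed.

Lemma glue_lK : cancel glue_l proj_l.
Proof. by move=> x; rewrite /proj_l val_sc_glue. Qed.

Lemma glue_rK : cancel glue_r proj_r.
Proof. by move=> y; rewrite /proj_r val_sc_glue; case: eqP => [[->]|]. Qed.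

Lemma proj_l_glue_r y : proj_l (glue_r y) = u.
Proof. by rewrite /proj_l val_sc_glue; case: eqP. Qed.

Lemma proj_r_glue_l x : proj_r (glue_l x) = v.
Proof. by rewrite /proj_r val_sc_glue. Qed.

Lemma glue_l_root : glue_l u = glue_r v.
Proof. by apply: val_inj; rewrite !val_sc_glue eqxx. Qed.

Lemma sc_vertP (w : vert S) : (exists x, w = glue_l x) \/ (exists y, w = glue_r y).
Proof.
case: w => [[x|y] yv]; [left; exists x | right; exists y];
  by apply: val_inj; rewrite val_sc_glue //= yv.
Qed.

Lemma proj_l_collapse (e : edge S) : e \notin codom inl -> proj_l (ends e).1 = proj_l (ends e).2.
Proof.
by case: e => [g /negP []|h _]; [apply: codom_f | rewrite /= !proj_l_glue_r].
Qed.

Lemma proj_r_collapse (e : edge S) : e \notin codom inr -> proj_r (ends e).1 = proj_r (ends e).2.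
Proof.
by case: e => [g _|h /negP []]; [rewrite /= !proj_r_glue_l | apply: codom_f].
Qed.

Lemma sc_connected (F : {set edge S}) :
  connectedF (inl @^-1: F) -> connectedF (inr @^-1: F) -> connectedF F.
Proof.
move=> /forallP connG /forallP connH.
have pushG x y : connect (adjF F) (glue_l x) (glue_l y).
  by apply: (@connect_push G S inl glue_l) => //; exact: (forallP (connG x) y).
have pushH x y : connect (adjF F) (glue_r x) (glue_r y).
  by apply: (@connect_push H S inr glue_r) => //; exact: (forallP (connH x) y).
apply/forallP => w1; apply/forallP => w2.
have [[x ->]|[x ->]] := sc_vertP w1; have [[y ->]|[y ->]] := sc_vertP w2 => //.
  by apply: connect_trans (pushG x u) _; rewrite glue_l_root.
by apply: connect_trans (pushH x v) _; rewrite -glue_l_root.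
Qed.

Lemma sc_spanning_tree (F : {set edge S}) :
  spanning_tree (inl @^-1: F) -> spanning_tree (inr @^-1: F) -> spanning_tree F.
Proof.
case/andP=> connG /forall_inP treeG; case/andP=> connH /forall_inP treeH.
rewrite /spanning_tree sc_connected //=; apply/forall_inP => -[g|h] eF.
- apply: (@bridge_push G S inl glue_l) glue_lK proj_l_collapse _ _ inl_inj (treeG g _) => //.
  by rewrite inE.
- apply: (@bridge_push H S inr glue_r) glue_rK proj_r_collapse _ _ inr_inj (treeH h _) => //.
  by rewrite inE.
Qed.

Lemma card_sc_edge : #|edge S| = #|edge G| + #|edge H|.
Proof. exact: card_sum. Qed.

Lemma card_sc_vert : #|vert S| = (#|vert G| + #|vert H|).-1.
Proof.
rewrite /= card_sig -card_sum -(cardC1 (inr v)); apply: eq_card => x.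
by rewrite !inE.
Qed.

End Series.

Lemma window_preimset (A S : graph) (j : edge A -> edge S) (c : nat -> nat)
    (OA : edge A -> 'I_#|edge A|) (O : edge S -> 'I_#|edge S|) (Q : 'I_#|edge S| -> edge S) :
  staircase c #|edge S| #|edge A| #|vert S|.-1 #|vert A|.-1 ->
  cancel O Q -> cancel Q O ->
  (forall t g, (Q t == j g) = rises c t && (c t == OA g)) ->
  forall i, j @^-1: window O i = window OA (c i %% #|edge A|).
Proof.
move=> cS OK QK QE i; apply/setP => g; rewrite !inE.
have N_gt0 := staircase_gt0 cS.
transitivity [exists k : 'I_#|vert S|.-1,
                rises c (i + k) && (c ((i + k) %% #|edge S|) == OA g)].
  apply: eq_existsb => k; have lt_mod := ltn_pmod (i + k) N_gt0.
  rewrite -[(i + k) %% _]/(val (Ordinal lt_mod)) val_eqE (can2_eq OK QK) eq_sym.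
  by rewrite QE /= (rises_mod cS).
rewrite (rises_window cS) //; apply: eq_existsb => k.
by rewrite modnDml eq_sym.
Qed.

Lemma can_insubd_eq n (T : eqType) (f : 'I_n -> T) (f' : T -> 'I_n) :
  cancel f f' -> cancel f' f ->
  forall x0 y z, y < n -> (f (insubd x0 y) == z) = (y == f' z).
Proof. by move=> fK f'K x0 y z yn; rewrite (can2_eq fK f'K) -val_eqE val_insubd yn. Qed.

Lemma density_cross (G H : graph) : 1 < #|vert G| -> 1 < #|vert H| ->
  density G = density H -> #|edge G| * #|vert H|.-1 = #|edge H| * #|vert G|.-1.
Proof.
move=> vG vH /eqP; rewrite /density GRing.eqr_div; last 2 first.
- by rewrite Num.Theory.pnatr_eq0 -lt0n ltn_predRL.
- by rewrite Num.Theory.pnatr_eq0 -lt0n ltn_predRL.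
by rewrite -!GRing.natrM Num.Theory.eqr_nat => /eqP.
Qed.

Lemma connected_edge_gt0 (G : graph) :
  1 < #|vert G| -> connected_graph G -> 0 < #|edge G|.
Proof.
case/card_gt1P => x [y [_ _ xy]] /forallP /(_ x) /forallP /(_ y) /connectP [[|z p]] /=.
  by move=> _ yx; rewrite yx eqxx in xy.
by case/andP => /existsP [e _] _ _; apply/card_gt0P; exists e.
Qed.

Section Interleave.
Variables (G H : graph) (u : vert G) (v : vert H).
Local Notation S := (series_comp u v).
Variables (OG : edge G -> 'I_#|edge G|) (OG' : 'I_#|edge G| -> edge G).
Variables (OH : edge H -> 'I_#|edge H|) (OH' : 'I_#|edge H| -> edge H).
Hypotheses (OGK : cancel OG OG') (OG'K : cancel OG' OG).
Hypotheses (OHK : cancel OH OH') (OH'K : cancel OH' OH).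
Hypotheses (treesG : forall i : 'I_#|edge G|, spanning_tree (window OG i))
  (treesH : forall i : 'I_#|edge H|, spanning_tree (window OH i)).
Hypotheses (vertG_gt1 : 1 < #|vert G|) (vertH_gt1 : 1 < #|vert H|).
Hypotheses (edgeG_gt0 : 0 < #|edge G|) (edgeH_gt0 : 0 < #|edge H|).
Hypothesis density_eq : #|edge G| * #|vert H|.-1 = #|edge H| * #|vert G|.-1.

Definition count_l (t : nat) : nat := t * #|edge G| %/ (#|edge G| + #|edge H|).
Definition count_r (t : nat) : nat := t - count_l t.

Lemma count_l_staircase :
  staircase count_l #|edge S| #|edge G| #|vert S|.-1 #|vert G|.-1.
Proof.
rewrite card_sc_edge card_sc_vert; apply: floor_staircase; first by rewrite addn_gt0 edgeG_gt0.
  exact: leq_addr.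
by move: vertG_gt1 vertH_gt1 density_eq; lia.
Qed.

Lemma count_r_staircase :
  staircase count_r #|edge S| #|edge H| #|vert S|.-1 #|vert H|.-1.
Proof.
have := staircase_complement count_l_staircase.
have -> : #|edge S| - #|edge G| = #|edge H| by rewrite card_sc_edge addKn.
by have -> // : #|vert S|.-1 - #|vert G|.-1 = #|vert H|.-1 by rewrite card_sc_vert; lia.
Qed.

(* The defaults of [insubd] are never reached, by [rises_lt]. *)
Definition interleave (t : 'I_#|edge S|) : edge S :=
  if rises count_l t then inl (OG' (insubd (Ordinal edgeG_gt0) (count_l t)))
  else inr (OH' (insubd (Ordinal edgeH_gt0) (count_r t))).

Lemma interleave_inl t g : (interleave t == inl g) = rises count_l t && (count_l t == OG g).
Proof.
rewrite /interleave; case: ifP => //= rt; rewrite (inj_eq inl_inj).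
by rewrite (can_insubd_eq OG'K OGK) // (rises_lt count_l_staircase).
Qed.

Lemma interleave_inr t g : (interleave t == inr g) = rises count_r t && (count_r t == OH g).
Proof.
have rE := rises_complement count_l_staircase.
rewrite /interleave rE; case: ifP => //= rt; rewrite (inj_eq inr_inj).
by rewrite (can_insubd_eq OH'K OHK) // (rises_lt count_r_staircase) ?rE ?rt.
Qed.

Lemma interleave_inj : injective interleave.
Proof.
move=> t1 t2 e12; apply: val_inj.
case E: (interleave t2) e12 => [g|h] /eqP E1; move/eqP: E.
- rewrite !interleave_inl in E1 * => /andP [r2 /eqP c2]; case/andP: E1 => r1 /eqP c1.
  by apply: (rises_inj count_l_staircase) => //; rewrite c1 c2.
- rewrite !interleave_inr in E1 * => /andP [r2 /eqP c2]; case/andP: E1 => r1 /eqP c1.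
  by apply: (rises_inj count_r_staircase) => //; rewrite c1 c2.
Qed.

Lemma series_CBO : exists O, CBO (G := S) O.
Proof.
have [O interleaveK OK] : bijective interleave.
  by apply: (@inj_card_bij _ _ _ interleave_inj); rewrite card_ord.
exists O; split=> [|i]; first by exists interleave.
apply: sc_spanning_tree.
  rewrite (window_preimset count_l_staircase OK interleaveK interleave_inl).
  exact: (treesG (Ordinal (ltn_pmod (count_l i) edgeG_gt0))).
rewrite (window_preimset count_r_staircase OK interleaveK interleave_inr).
exact: (treesH (Ordinal (ltn_pmod (count_r i) edgeH_gt0))).
Qed.

End Interleave.

Theorem mainTheorem6 (G H : graph) (u : vert G) (v : vert H) :
  1 < #|vert G| -> 1 < #|vert H| ->
  cyclically_orderable G -> cyclically_orderable H ->
  density G = density H ->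
  cyclically_orderable (series_comp u v).
Proof.
move=> vG vH [connG [OG [[OG' OGK OG'K] treesG]]] [connH [OH [[OH' OHK OH'K] treesH]]] dGH.
split; first by apply: sc_connected; rewrite !preimsetT.
apply: (series_CBO u v OGK OG'K OHK OH'K treesG treesH vG vH).
- exact: connected_edge_gt0 vG connG.
- exact: connected_edge_gt0 vH connH.
- exact: density_cross vG vH dGH.
Qed.
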